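(* Let $\mathcal B,\tilde{\mathcal B}$ be any two circles of $\mathbb M(q)$ and let $\tau$ be any Möbius transformation of $\mathbb M(q)$. Then $$\operatorname{cap}(\mathcal B,\tilde{\mathcal B})=\operatorname{cap}(\tau(\mathcal B),\tau(\tilde{\mathcal B})).$$
   Context: Let $p$ be an odd prime, $m\ge1$, and $q=p^m$. $GF(q^2)$ denotes the quadratic extension of $GF(q)$, and for $z\in GF(q^2)$ we write $\bar z:=z^{q}$. The Miquelian Möbius plane $\mathbb M(q)$ has point set $GF(q^2)\cup\{\infty\}$ and circles of two types: for $s\in GF(q^2)$ and $c\in GF(q)\setminus\{0\}$, $\mathcal B^1_{(s,c)}=\{z\in GF(q^2):(z-s)(\bar z-\bar s)=c\}$; for $s\in GF(q^2)\setminus\{0\}$ and $c\in GF(q)$, $\mathcal B^2_{(s,c)}=\{z\in GF(q^2):\bar s z+s\bar z=c\}\cup\{\infty\}$ (note $\mathcal B^2_{(\lambda s,\lambda c)}=\mathcal B^2_{(s,c)}$ for $\lambda\in GF(q)\setminus\{0\}$). A Möbius transformation is a map $\Phi(z)=\frac{az+b}{cz+d}$ with $a,b,c,d\in GF(q^2)$, $ad-bc\neq0$, extended to $GF(q^2)\cup\{\infty\}$ by $\Phi(z)=\infty$ if $cz+d=0$, $\Phi(\infty)=a/c$ if $c\ne0$, $\Phi(\infty)=\infty$ if $c=0$; it maps circles to circles. The capacitance of a pair of circles is the element of $GF(q)$ defined by $\operatorname{cap}(\mathcal B^1_{(s_1,c_1)},\mathcal B^1_{(s_2,c_2)})=\frac{1}{c_1c_2}\bigl(c_1+c_2-(s_1-s_2)(\bar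 s_1-\bar s_2)\bigr)^2$, $\operatorname{cap}(\mathcal B^1_{(s_1,c_1)},\mathcal B^2_{(s_2,c_2)})=\operatorname{cap}(\mathcal B^2_{(s_2,c_2)},\mathcal B^1_{(s_1,c_1)})=\frac{1}{c_1s_2\bar s_2}(s_1\bar s_2+\bar s_1s_2-c_2)^2$, $\operatorname{cap}(\mathcal B^2_{(s_1,c_1)},\mathcal B^2_{(s_2,c_2)})=\frac{1}{s_1\bar s_1s_2\bar s_2}(s_1\bar s_2+\bar s_1s_2)^2$. *)

From HB Require Import structures.
From mathcomp Require Import all_boot all_order all_algebra all_field.
Set Implicit Arguments. Unset Strict Implicit. Unset Printing Implicit Defensive.
Import GRing.Theory.
Local Open Scope ring_scope.

(* L plays the role of GF(q^2); q is given explicitly (q = p^m, #|L| = q^2).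
   GF(q) is the subfield {z | z^q = z} of L; conjugation is z |-> z^q.
   Points of the Moebius plane: option L, with None = infinity. *)

Definition mconj (L : finFieldType) (q : nat) (z : L) : L := z ^+ q.
Definition inGFq (L : finFieldType) (q : nat) (z : L) : bool := z ^+ q == z.

Inductive circ (L : finFieldType) : Type :=
| Circ1 of L & L
| Circ2 of L & L.

Definition valid_circ (L : finFieldType) (q : nat) (B : circ L) : bool :=
  match B with
  | Circ1 s c => inGFq q c && (c != 0)
  | Circ2 s c => (s != 0) && inGFq q c
  end.

Definition circle_pts (L : finFieldType) (q : nat) (B : circ L) : {set option L} :=
  match B with
  | Circ1 s c => [set Some z | z in [set z : L | (z - s) * (mconj q z - mconj q s) == c]]
  | Circ2 s c => None |: [set Some z | z in [set z : L | mconj q s * z + s * mconj q z == c]]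
  end.

Definition mobius (L : finFieldType) (a b c d : L) (x : option L) : option L :=
  match x with
  | Some z => if c * z + d == 0 then None else Some ((a * z + b) / (c * z + d))
  | None => if c != 0 then Some (a / c) else None
  end.

Definition cap (L : finFieldType) (q : nat) (B B' : circ L) : L :=
  match B, B' with
  | Circ1 s1 c1, Circ1 s2 c2 =>
      (c1 + c2 - (s1 - s2) * (mconj q s1 - mconj q s2)) ^+ 2 / (c1 * c2)
  | Circ1 s1 c1, Circ2 s2 c2 =>
      (s1 * mconj q s2 + mconj q s1 * s2 - c2) ^+ 2 / (c1 * (s2 * mconj q s2))
  | Circ2 s2 c2, Circ1 s1 c1 =>
      (s1 * mconj q s2 + mconj q s1 * s2 - c2) ^+ 2 / (c1 * (s2 * mconj q s2))
  | Circ2 s1 c1, Circ2 s2 c2 =>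
      (s1 * mconj q s2 + mconj q s1 * s2) ^+ 2
        / (s1 * mconj q s1 * (s2 * mconj q s2))
  end.

(* Every circle is the zero set, in homogeneous coordinates, of a Hermitian form
   [A z1 z1^q + b^q z1 z2^q + b z1^q z2 + C z2 z2^q] with [A, C] in GF(q), and the
   capacitance of two circles is [<H, H'>^2 / (disc H * disc H')], where [<., .>] is
   the polar form and [disc H = b b^q - A C].  A Moebius transformation acts on forms by
   pullback along the adjugate of its matrix, which multiplies both [<., .>] and [disc]
   by the norm of the determinant, so this ratio is invariant.  The form of a circle is
   determined by its point set up to a nonzero factor in GF(q) (here one uses that the
   norm GF(q^2)^* -> GF(q)^* is onto and that some [i] satisfies [i^q = -i]); hence the
   transformed form of a circle is a GF(q)-multiple of the form of its image circle, and
   the ratio is insensitive to such rescalings. *)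

From HB Require Import structures.
From mathcomp Require Import all_boot all_order all_algebra all_field.
From mathcomp Require Import ring zify.
Import GRing.Theory.
Local Open Scope ring_scope.
Set Implicit Arguments. Unset Strict Implicit. Unset Printing Implicit Defensive.

Lemma card_root_lt (F : finFieldType) (P : {poly F}) :
  P != 0 -> (#|[set x | root P x]| < size P)%N.
Proof.
move=> P0; rewrite cardE; apply: max_poly_roots => //; last exact: enum_uniq.
by apply/allP => x; rewrite mem_enum inE.
Qed.

Lemma card_expr_eq_le (F : finFieldType) (n : nat) (y : F) :
  (0 < n)%N -> (#|[set x : F | x ^+ n == y]| <= n)%N.
Proof.
move=> n_gt0; have P0 : ('X^n - y%:P : {poly F}) != 0.
  by rewrite -size_poly_eq0 size_XnsubC.
have := card_root_lt P0; rewrite size_XnsubC // ltnS; apply: leq_trans.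
apply: subset_leq_card; apply/subsetP => x.
by rewrite !inE rootE !hornerE subr_eq0.
Qed.

Lemma card_expr_fixed_le (F : finFieldType) (n : nat) :
  (1 < n)%N -> (#|[set x : F | x ^+ n == x]| <= n)%N.
Proof.
move=> n_gt1; have size_P : size ('X^n - 'X : {poly F}) = n.+1.
  by rewrite size_polyDl size_polyXn // size_polyN size_polyX.
have P0 : ('X^n - 'X : {poly F}) != 0 by rewrite -size_poly_eq0 size_P.
have := card_root_lt P0; rewrite size_P ltnS; apply: leq_trans.
apply: subset_leq_card; apply/subsetP => x.
by rewrite !inE rootE !hornerE subr_eq0.
Qed.

Lemma sqr_div_scale (F : fieldType) (k x y : F) :
  k != 0 -> (k * x) ^+ 2 / (k ^+ 2 * y) = x ^+ 2 / y.
Proof. by move=> k0; rewrite exprMn invfM mulrACA divff ?mul1r // expf_neq0. Qed.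

Definition hcoords (L : finFieldType) (P : option L) : L * L :=
  if P is Some z then (z, 1) else (1, 0).

Lemma hcoords_inj (L : finFieldType) (P P' : option L) (k : L) : k != 0 ->
  hcoords P = (k * (hcoords P').1, k * (hcoords P').2) -> P = P'.
Proof.
move=> k0; case: P => [z|]; case: P' => [z'|] //= [e1 e2].
- by move: e2; rewrite mulr1 => e2; rewrite e1 -e2 mul1r.
- by move/eqP: e2; rewrite mulr0 oner_eq0.
- by move/eqP: e2; rewrite eq_sym mulr1 (negbTE k0).
Qed.

Section MobiusCoordinates.

Variables (L : finFieldType) (a b c d : L).
Hypothesis det_neq0 : a * d - b * c != 0.

Lemma hcoords_mobius (P : option L) : exists2 k, k != 0 &
  hcoords (mobius a b c d P) = (k * (a * (hcoords P).1 + b * (hcoords P).2),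
                                k * (c * (hcoords P).1 + d * (hcoords P).2)).
Proof.
case: P => [z|] /=.
- have [den0|den_neq0] := eqVneq (c * z + d) 0; last first.
    by exists (c * z + d)^-1; rewrite ?invr_eq0 // !mulr1 mulVf // mulrC.
  have num_neq0 : a * z + b != 0.
    apply: contraNneq det_neq0 => num0.
    have -> : a * d - b * c = a * (c * z + d) - c * (a * z + b) by ring.
    by rewrite den0 num0 !mulr0 subrr.
  by exists (a * z + b)^-1; rewrite ?invr_eq0 // !mulr1 den0 mulr0 mulVf.
- have [c0|c_neq0] := eqVneq c 0; last first.
    by exists c^-1; rewrite ?invr_eq0 // !mulr0 !addr0 !mulr1 mulVf // mulrC.
  have a_neq0 : a != 0 by apply: contraNneq det_neq0 => a0; rewrite a0 c0; apply/eqP; ring.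
  by exists a^-1; rewrite ?invr_eq0 //= c0 !mulr0 !addr0 !mulr1 mulVf ?mulr0.
Qed.

End MobiusCoordinates.

Lemma mobiusK (L : finFieldType) (a b c d : L) (P : option L) :
  a * d - b * c != 0 -> mobius a b c d (mobius d (- b) (- c) a P) = P.
Proof.
move=> det_neq0.
have det'_neq0 : d * a - (- b) * (- c) != 0 by rewrite mulrNN mulrC.
have [k k0 eP] := hcoords_mobius det_neq0 (mobius d (- b) (- c) a P).
have [k' k'0 eP'] := hcoords_mobius det'_neq0 P.
apply: (hcoords_inj (k := k * k' * (a * d - b * c))); first by rewrite !mulf_neq0.
by rewrite eP eP' /=; congr pair; ring.
Qed.

Section QuadraticExtension.

Variables (L : finFieldType) (q : nat).
Hypothesis conjD : forall x y : L, (x + y) ^+ q = x ^+ q + y ^+ q.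
Hypothesis card_L : #|L| = (q * q)%N.
Hypothesis q_gt2 : (2 < q)%N.
Hypothesis two_neq0 : (2 : L) != 0.

Lemma conjK (x : L) : (x ^+ q) ^+ q = x.
Proof. by rewrite -exprM -card_L expf_card. Qed.

Lemma conj0 : (0 : L) ^+ q = 0.
Proof. by apply/(addrI (0 ^+ q)); rewrite -conjD !addr0. Qed.

Lemma conjN (x : L) : (- x) ^+ q = - x ^+ q.
Proof. by apply/(addrI (x ^+ q)); rewrite -conjD !subrr conj0. Qed.

Lemma conjB (x y : L) : (x - y) ^+ q = x ^+ q - y ^+ q.
Proof. by rewrite conjD conjN. Qed.

Lemma conj_eq0 (x : L) : (x ^+ q == 0) = (x == 0).
Proof. by rewrite expf_eq0 (ltn_trans _ q_gt2). Qed.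

(* The norm [w |-> w w^q] maps the [q^2 - 1] units of [L] into the [q - 1] units
   of [GF(q)] with fibres of size at most [q + 1]; missing one value would leave
   room for at most [(q - 2)(q + 1) < q^2 - 1] units. *)
Lemma norm_surj (c : L) : c ^+ q = c -> c != 0 -> exists w, w * w ^+ q = c.
Proof.
move=> c_real c0.
case: (pickP (fun w : L => w * w ^+ q == c)) => [w /eqP <- | miss]; first by exists w.
exfalso.
pose S := [set y : L | [&& y ^+ q == y, y != 0 & y != c]].
have card_S : (#|S| + 2 <= q)%N.
  have c_fixed : c \in [set y : L | y ^+ q == y] by rewrite inE c_real.
  have zero_fixed : 0 \in [set y : L | y ^+ q == y] :\ c.
    by rewrite !inE conj0 eqxx andbT eq_sym.
  apply: leq_trans _ (card_expr_fixed_le L (ltnW q_gt2)).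
  rewrite [leqRHS](cardsD1 c) c_fixed (cardsD1 0 (_ :\ c)) zero_fixed addn2 !add1n !ltnS.
  by apply: subset_leq_card; apply/subsetP => y; rewrite !inE => /and3P [-> -> ->].
have card_units : (#|[set~ (0 : L)%R]| <= #|S| * q.+1)%N.
  rewrite -sum1_card (partition_big (fun x : L => x * x ^+ q) (mem S)); last first.
    move=> x; rewrite !inE => x0.
    by rewrite exprMn conjK mulrC eqxx mulf_neq0 ?expf_neq0 //= miss.
  rewrite -sum_nat_const; apply: leq_sum => y _; rewrite sum1dep_card.
  apply: leq_trans (card_expr_eq_le y (ltn0Sn q)).
  by apply: subset_leq_card; apply/subsetP => x; rewrite !inE exprS => /andP [].
by rewrite cardsC1 card_L in card_units; nia.
Qed.

Lemma exists_skew : exists2 i : L, i != 0 & i ^+ q = - i.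
Proof.
have [v v_nonreal] : exists v : L, v ^+ q != v.
  apply/existsP; rewrite -negb_forall; apply/negP => /forallP all_real.
  have := card_expr_fixed_le L (ltnW q_gt2).
  have -> : [set x : L | x ^+ q == x] = setT by apply/setP => x; rewrite !inE all_real.
  by rewrite cardsT card_L; nia.
exists (v - v ^+ q); first by rewrite subr_eq0 eq_sym.
by rewrite conjB conjK opprB.
Qed.

Lemma exists_unit_nonreal : exists2 u : L, u * u ^+ q = 1 & u ^+ q != u.
Proof.
have [i i0 i_skew] := exists_skew.
have conj_v : (1 + i) ^+ q = 1 - i by rewrite conjD expr1n i_skew.
have two_eq : (2 : L) = (1 + i) + (1 + i) ^+ q by rewrite conj_v; ring.
have v0 : 1 + i != 0 by apply: contraNneq two_neq0 => v0; rewrite two_eq v0 conj0 addr0.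
have vq0 : 1 - i != 0 by rewrite -conj_v conj_eq0.
have conj_u : ((1 + i) / (1 - i)) ^+ q = (1 - i) / (1 + i).
  by rewrite exprMn exprVn conj_v conjB expr1n i_skew opprK.
exists ((1 + i) / (1 - i)); rewrite conj_u; first by field; apply/andP.
apply: contra i0 => /eqP eq_u.
have : i * (2 * 2) = (1 + i) * (1 - i) * ((1 + i) / (1 - i) - (1 - i) / (1 + i)).
  by field; apply/andP.
by rewrite eq_u subrr mulr0 => /eqP; rewrite !mulf_eq0 (negbTE two_neq0) !orbF.
Qed.

(* Test the inclusion at the points [s + w u] with [w w^q = c] and [u = 1, -1, u0]. *)
Lemma circle_sub_eq (s c s' c' : L) : c ^+ q = c -> c != 0 ->
    (forall z, (z - s) * (z ^+ q - s ^+ q) = c -> (z - s') * (z ^+ q - s' ^+ q) = c') ->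
  s = s' /\ c = c'.
Proof.
move=> c_real c0 sub.
have [w norm_w] := norm_surj c_real c0.
have [u0 u0_unit u0_nonreal] := exists_unit_nonreal.
pose t := s - s'; pose x := t ^+ q * w.
have on_circle u : u * u ^+ q = 1 -> t * t ^+ q + c + (x ^+ q * u ^+ q + x * u) = c'.
  move=> u_unit; rewrite -(sub (s + w * u)); last first.
    by rewrite conjD exprMn -norm_w -[X in _ = X]mulr1 -u_unit; ring.
  by rewrite /x exprMn conjK /t conjB conjD exprMn -[c]mulr1 -u_unit -norm_w; ring.
have f1 := on_circle 1 ltac:(by rewrite expr1n mulr1).
have fm1 := on_circle (-1) ltac:(by rewrite conjN expr1n mulrNN mulr1).
have fu0 := on_circle u0 u0_unit.
rewrite conjN !expr1n in f1 fm1.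
have x_skew : x ^+ q = - x.
  have := etrans f1 (esym fm1) => /addrI; rewrite !mulr1 !mulrN1 => sym.
  have : (x ^+ q + x) * 2 = (x ^+ q + x) - (- x ^+ q - x) by ring.
  rewrite {2}sym subrr => /eqP; rewrite mulf_eq0 (negbTE two_neq0) orbF.
  by rewrite addr_eq0 => /eqP.
have x0 : x = 0.
  have := etrans fu0 (esym f1) => /addrI /eqP.
  rewrite x_skew !mulr1 addNr mulNr addrC -mulrBr mulf_eq0 subr_eq0.
  by rewrite (eq_sym u0) (negbTE u0_nonreal) orbF => /eqP.
have t0 : t = 0.
  have w0 : w != 0 by apply: contraNneq c0 => w0; rewrite -norm_w w0 mul0r.
  by move: x0 => /eqP; rewrite mulf_eq0 (negbTE w0) orbF conj_eq0 => /eqP.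
split; first by apply/eqP; rewrite -subr_eq0 -/t t0.
by rewrite -f1 x0 t0 conj0 !mul0r !add0r addr0.
Qed.

(* Test the inclusion at the points [z0] and [z0 + i s] of the line. *)
Lemma line_sub_eq (s c e C : L) : s != 0 -> c ^+ q = c ->
    (forall z, s ^+ q * z + s * z ^+ q = c -> e ^+ q * z + e * z ^+ q + C = 0) ->
  exists2 l, l ^+ q = l & e = l * s /\ C = - (l * c).
Proof.
move=> s0 c_real sub.
have [i i0 i_skew] := exists_skew.
have sq0 : s ^+ q != 0 by rewrite conj_eq0.
pose z0 := c / (2 * s ^+ q).
have conj_z0 : z0 ^+ q = c / (2 * s).
  by rewrite exprMn exprVn exprMn conjK c_real conjD expr1n.
have on_z0 := sub z0 ltac:(by rewrite conj_z0 /z0; field; apply/and3P).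
have on_z1 := sub (z0 + i * s).
rewrite conjD conj_z0 exprMn i_skew in on_z1; rewrite conj_z0 in on_z0.
have {}on_z1 := on_z1 ltac:(by rewrite /z0; field; apply/and3P).
have e_real : e ^+ q * s = e * s ^+ q.
  have := etrans on_z1 (esym on_z0) => /eqP; rewrite -subr_eq0.
  have -> : e ^+ q * (z0 + i * s) + e * (c / (2 * s) + - i * s ^+ q) + C
          - (e ^+ q * z0 + e * (c / (2 * s)) + C) = i * (e ^+ q * s - e * s ^+ q) by ring.
  by rewrite mulf_eq0 (negbTE i0) subr_eq0 => /eqP.
have conj_e : e ^+ q = e * s ^+ q / s by rewrite -e_real mulfK.
exists (e / s); first by rewrite exprMn exprVn conj_e; field; apply/andP.
split; first by rewrite divfK.
have -> : C = (e ^+ q * z0 + e * (c / (2 * s)) + C) - (e ^+ q * z0 + e * (c / (2 * s))).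
  by ring.
by rewrite on_z0 sub0r conj_e /z0; field; apply/and3P.
Qed.

Record hform := HForm { hA : L; hb : L; hC : L }.

Definition hermitian (H : hform) : Prop := hA H ^+ q = hA H /\ hC H ^+ q = hC H.

Definition hval (H : hform) (v : L * L) : L :=
  let: (z1, z2) := v in
  hA H * z1 * z1 ^+ q + hb H ^+ q * z1 * z2 ^+ q + hb H * z1 ^+ q * z2
  + hC H * z2 * z2 ^+ q.

Definition hzero (H : hform) : {set option L} := [set P | hval H (hcoords P) == 0].

Definition hdisc (H : hform) : L := hb H * hb H ^+ q - hA H * hC H.

Definition hpolar (H H' : hform) : L :=
  hA H * hC H' + hA H' * hC H - hb H * hb H' ^+ q - hb H ^+ q * hb H'.

Definition hcap (H H' : hform) : L := hpolar H H' ^+ 2 / (hdisc H * hdisc H').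

Definition hscale (l : L) (H : hform) : hform := HForm (l * hA H) (l * hb H) (l * hC H).

Definition hform_of (B : circ L) : hform :=
  match B with
  | Circ1 s c => HForm 1 (- s) (s * s ^+ q - c)
  | Circ2 s c => HForm 0 s (- c)
  end.

(* The pullback of [H] along the adjugate [[d, -b], [-c, a]] of the matrix of the
   Moebius transformation (see [hval_mobius]). *)
Definition hform_mobius (a b c d : L) (H : hform) : hform :=
  let: HForm A e C := H in
  HForm (A * d * d ^+ q - e ^+ q * d * c ^+ q - e * d ^+ q * c + C * c * c ^+ q)
        (- A * d ^+ q * b + e * d ^+ q * a + e ^+ q * b * c ^+ q - C * c ^+ q * a)
        (A * b * b ^+ q - e ^+ q * b * a ^+ q - e * b ^+ q * a + C * a * a ^+ q).

Lemma cap_hform (B B' : circ L) : cap q B B' = hcap (hform_of B) (hform_of B').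
Proof.
by case: B => s c; case: B' => s' c'; rewrite /cap /hcap /hpolar /hdisc /mconj /= ?conjN;
  congr (_ / _); ring.
Qed.

Lemma hzero_None (H : hform) : (None \in hzero H) = (hA H == 0).
Proof. by rewrite inE /= expr1n conj0; congr (_ == 0); ring. Qed.

Lemma circle_pts_hform (B : circ L) : circle_pts q B = hzero (hform_of B).
Proof.
apply/setP => -[z|]; last first.
  rewrite hzero_None; case: B => s c /=; rewrite ?setU11 ?eqxx ?oner_eq0 //.
  by apply: negbTE; apply/imsetP => -[].
case: B => s c; rewrite [RHS]inE /= ?in_setU1 (mem_imset _ _ Some_inj) inE /mconj.
- by rewrite conjN expr1n -subr_eq0; congr (_ == 0); ring.
- by rewrite expr1n -subr_eq0; congr (_ == 0); ring.
Qed.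

Lemma hermitian_hform (B : circ L) : valid_circ q B -> hermitian (hform_of B).
Proof.
case: B => s c /andP []; rewrite /inGFq /hermitian /=.
- by move=> /eqP c_real _; rewrite expr1n conjB exprMn conjK c_real mulrC.
- by move=> _ /eqP c_real; rewrite conj0 conjN c_real.
Qed.

Lemma hdisc_hform_neq0 (B : circ L) : valid_circ q B -> hdisc (hform_of B) != 0.
Proof.
rewrite /hdisc; case: B => s c /andP [] /=.
- move=> _ c0; rewrite conjN.
  by have -> : - s * - s ^+ q - 1 * (s * s ^+ q - c) = c by ring.
- by move=> s0 _; rewrite mul0r subr0 mulf_neq0 ?conj_eq0.
Qed.

Lemma hval_scale (H : hform) (k z1 z2 : L) :
  hval H (k * z1, k * z2) = k * k ^+ q * hval H (z1, z2).
Proof. by rewrite /= !exprMn; ring. Qed.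

Lemma hdisc_scale (l : L) (H : hform) : l ^+ q = l -> hdisc (hscale l H) = l * l * hdisc H.
Proof. by move=> l_real; rewrite /hdisc /= exprMn l_real; ring. Qed.

Lemma hpolar_scale (l m : L) (H H' : hform) : l ^+ q = l -> m ^+ q = m ->
  hpolar (hscale l H) (hscale m H') = l * m * hpolar H H'.
Proof. by move=> l_real m_real; rewrite /hpolar /= !exprMn l_real m_real; ring. Qed.

Lemma hcap_scale (l m : L) (H H' : hform) : l ^+ q = l -> m ^+ q = m ->
  l != 0 -> m != 0 -> hcap (hscale l H) (hscale m H') = hcap H H'.
Proof.
move=> l_real m_real l0 m0; rewrite /hcap hpolar_scale // !hdisc_scale //.
have -> : l * l * hdisc H * (m * m * hdisc H') = (l * m) ^+ 2 * (hdisc H * hdisc H').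
  by ring.
by rewrite sqr_div_scale ?mulf_neq0.
Qed.

Section Mobius.

Variables (a b c d : L).
Hypothesis det_neq0 : a * d - b * c != 0.
Let normdet := (a * d - b * c) * (a * d - b * c) ^+ q.

Lemma normdet_neq0 : normdet != 0.
Proof. by rewrite mulf_neq0 ?conj_eq0. Qed.

Lemma hval_mobius (H : hform) (w1 w2 : L) : hermitian H ->
  hval (hform_mobius a b c d H) (w1, w2) = hval H (d * w1 - b * w2, - c * w1 + a * w2).
Proof.
case: H => A e C [/= A_real C_real].
by rewrite /= ?(conjB, conjD, conjN, exprMn, conjK) A_real C_real; ring.
Qed.

Lemma hermitian_mobius (H : hform) : hermitian H -> hermitian (hform_mobius a b c d H).
Proof.
case: H => A e C [/= A_real C_real].
by split; rewrite /= ?(conjB, conjD, conjN, exprMn, conjK) A_real C_real; ring.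
Qed.

Lemma hdisc_mobius (H : hform) :
  hermitian H -> hdisc (hform_mobius a b c d H) = normdet * hdisc H.
Proof.
case: H => A e C [/= A_real C_real].
by rewrite /hdisc /normdet /= ?(conjB, conjD, conjN, exprMn, conjK) A_real C_real; ring.
Qed.

Lemma hpolar_mobius (H H' : hform) : hermitian H -> hermitian H' ->
  hpolar (hform_mobius a b c d H) (hform_mobius a b c d H') = normdet * hpolar H H'.
Proof.
case: H => A e C [/= A_real C_real]; case: H' => A' e' C' [/= A'_real C'_real].
by rewrite /hpolar /normdet /= ?(conjB, conjD, conjN, exprMn, conjK)
  A_real C_real A'_real C'_real; ring.
Qed.

Lemma hcap_mobius (H H' : hform) : hermitian H -> hermitian H' ->
  hcap (hform_mobius a b c d H) (hform_mobius a b c d H') = hcap H H'.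
Proof.
move=> herH herH'; rewrite /hcap hpolar_mobius // !hdisc_mobius //.
have -> : normdet * hdisc H * (normdet * hdisc H') = normdet ^+ 2 * (hdisc H * hdisc H').
  by ring.
by rewrite sqr_div_scale // normdet_neq0.
Qed.

Lemma mem_hzero_mobius (H : hform) (P : option L) : hermitian H ->
  (mobius a b c d P \in hzero (hform_mobius a b c d H)) = (P \in hzero H).
Proof.
move=> herH; rewrite !inE; have [k k0 ->] := hcoords_mobius det_neq0 P.
case: (hcoords P) => z1 z2; rewrite hval_mobius //.
have -> : d * (k * (a * z1 + b * z2)) - b * (k * (c * z1 + d * z2))
          = k * ((a * d - b * c) * z1) by ring.
have -> : - c * (k * (a * z1 + b * z2)) + a * (k * (c * z1 + d * z2))
          = k * ((a * d - b * c) * z2) by ring.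
by rewrite !hval_scale !mulf_eq0 !conj_eq0 (negbTE k0) (negbTE det_neq0).
Qed.

Lemma hzero_mobius (H : hform) : hermitian H ->
  mobius a b c d @: hzero H = hzero (hform_mobius a b c d H).
Proof.
move=> herH; apply/setP => P; apply/imsetP/idP => [[P' P'_in ->] | P_in].
  by rewrite mem_hzero_mobius.
exists (mobius d (- b) (- c) a P); last by rewrite mobiusK.
by rewrite -(mem_hzero_mobius _ herH) mobiusK.
Qed.

End Mobius.

Lemma hzero_circle_scale (H : hform) (D : circ L) : hermitian H -> valid_circ q D ->
  hzero H = circle_pts q D -> exists2 l, l ^+ q = l & H = hscale l (hform_of D).
Proof.
case: H => A e C [/= A_real C_real] D_valid hZ.
have on_D z : Some z \in circle_pts q D -> A * z * z ^+ q + e ^+ q * z + e * z ^+ q + C = 0.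
  by rewrite -hZ inE /= expr1n !mulr1 => /eqP.
have inf_D : (None \in circle_pts q D) = (A == 0) by rewrite -hZ hzero_None.
case: D D_valid on_D inf_D {hZ} => s c /andP [] /=; rewrite /inGFq.
- move=> /eqP c_real c0 on_D inf_D.
  have A0 : A != 0 by rewrite -inf_D; apply/imsetP => -[].
  have conj_center : (- e / A) ^+ q = - e ^+ q / A by rewrite exprMn exprVn conjN A_real.
  have [-> ->] : s = - e / A /\ c = (e * e ^+ q - A * C) / (A * A).
    apply: circle_sub_eq c_real c0 _ => z on_z.
    have := on_D z; rewrite (mem_imset _ _ Some_inj) inE /mconj on_z eqxx => /(_ isT) on_H.
    have E : A * z * z ^+ q + e ^+ q * z + e * z ^+ q + C
             = A * ((z - - e / A) * (z ^+ q - (- e / A) ^+ q)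
                    - (e * e ^+ q - A * C) / (A * A)).
      by rewrite conj_center; field.
    by move/eqP: on_H; rewrite E mulf_eq0 (negbTE A0) subr_eq0 => /eqP.
  by exists A => //; rewrite /hscale /= conj_center; congr HForm; field.
- move=> s0 /eqP c_real on_D inf_D.
  have A0 : A = 0 by apply/eqP; rewrite -inf_D setU11.
  have [l l_real [-> ->]] : exists2 l, l ^+ q = l & e = l * s /\ C = - (l * c).
    apply: line_sub_eq s0 c_real _ => z on_z.
    have := on_D z; rewrite in_setU1 (mem_imset _ _ Some_inj) inE /mconj on_z eqxx.
    by rewrite orbT => /(_ isT); rewrite A0 !mul0r add0r.
  by exists l => //; rewrite /hscale /= A0 mulr0 mulrN.
Qed.

Theorem cap_mobius (B B' D D' : circ L) (a b c d : L) :
    valid_circ q B -> valid_circ q B' -> valid_circ q D -> valid_circ q D' ->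
    a * d - b * c != 0 ->
    circle_pts q D = mobius a b c d @: circle_pts q B ->
    circle_pts q D' = mobius a b c d @: circle_pts q B' ->
  cap q B B' = cap q D D'.
Proof.
move=> vB vB' vD vD' det_neq0 imB imB'; rewrite !cap_hform.
have nondeg X l Y : valid_circ q X -> l ^+ q = l ->
    hform_mobius a b c d (hform_of X) = hscale l Y -> l != 0.
  move=> vX l_real eXY; have := hdisc_mobius a b c d (hermitian_hform vX).
  rewrite eXY hdisc_scale // => disc_eq.
  apply: contraNneq (mulf_neq0 (normdet_neq0 det_neq0) (hdisc_hform_neq0 vX)) => l0.
  by rewrite -disc_eq l0 !mul0r.
have herB := hermitian_hform vB; have herB' := hermitian_hform vB'.
have zD : hzero (hform_mobius a b c d (hform_of B)) = circle_pts q D.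
  by rewrite imB circle_pts_hform hzero_mobius.
have zD' : hzero (hform_mobius a b c d (hform_of B')) = circle_pts q D'.
  by rewrite imB' circle_pts_hform hzero_mobius.
have [l l_real eD] := hzero_circle_scale (hermitian_mobius a b c d herB) vD zD.
have [m m_real eD'] := hzero_circle_scale (hermitian_mobius a b c d herB') vD' zD'.
rewrite -(hcap_mobius det_neq0 herB herB') eD eD' hcap_scale //.
  exact: nondeg vB l_real eD.
exact: nondeg vB' m_real eD'.
Qed.

End QuadraticExtension.

Theorem mainTheorem16 (L : finFieldType) (p m : nat)
  (hp : prime p) (hodd : odd p) (hm : (0 < m)%N) (hL : #|L| = ((p ^ m) ^ 2)%N)
  (B B' D D' : circ L)
  (hB : valid_circ (p ^ m) B) (hB' : valid_circ (p ^ m) B')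
  (hD : valid_circ (p ^ m) D) (hD' : valid_circ (p ^ m) D')
  (a b c d : L) (hdet : a * d - b * c != 0)
  (himB : circle_pts (p ^ m) D = mobius a b c d @: circle_pts (p ^ m) B)
  (himB' : circle_pts (p ^ m) D' = mobius a b c d @: circle_pts (p ^ m) B') :
  cap (p ^ m) B B' = cap (p ^ m) D D'.
Proof.
have p_gt2 : (2 < p)%N.
  by rewrite ltn_neqAle prime_gt1 // andbT; apply: contraTneq hodd => <-.
have q_gt2 : (2 < p ^ m)%N.
  by apply: leq_trans p_gt2 _; rewrite -{1}(expn1 p) leq_exp2l ?prime_gt1.
have char_p : p \in [pchar L] by apply: (card_finPcharP (n := m * 2)); rewrite ?expnM.
have conjD (x y : L) : (x + y) ^+ (p ^ m) = x ^+ (p ^ m) + y ^+ (p ^ m).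
  by apply: exprDn_pchar; rewrite pnatX (pnatE _ hp) char_p.
have two_neq0 : (2 : L) != 0.
  by rewrite -(dvdn_pcharf char_p) (dvdn_prime2 hp) // (gtn_eqF p_gt2).
have card_L : #|L| = (p ^ m * p ^ m)%N by rewrite mulnn.
exact: (cap_mobius conjD card_L q_gt2 two_neq0 hB hB' hD hD' hdet himB himB').
Qed.
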